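(* For each arrival $t\ge1$ and each level $i\ge 0$, we have $\mathscr{C}^{(t-1)}_{i+1}\preceq\mathscr{C}^{(t)}_{{\rm inh},i}$.
   Context: An offline instance $(\mathcal{M},D)$ consists of demand pairs $D=\{(u_j,v_j)\}$ over a terminal set $V=\{u_j,v_j\}$, each terminal in exactly one pair (the other element of its pair is its mate), and a metric $\mathcal{M}$ on $V$ with all distances at least $1$, viewed as the complete graph on $V$ with edge costs equal to distances. A clustering of $V$ is a partition of $V$; $\mathcal{M}/\mathscr{C}$ denotes the shortest-path metric on $\mathscr{C}$ of the graph obtained from the complete weighted graph on $V$ by contracting each cluster of $\mathscr{C}$ into a single vertex. For clusterings $\mathscr{C}_1$ of $V_1$ and $\mathscr{C}_2$ of $V_2$, write $\mathscr{C}_1\preceq\mathscr{C}_2$ if every cluster of $\mathscr{C}_1$ is contained in some cluster of $\mathscr{C}_2$. Clustering procedure: ${\sf level}(v)=\lceil\log_2{\sf dist}_{\mathcal{M}}(v,\text{mate of }v)\rceil$, ${\sf level}(C)=\max_{v\in C}{\sf level}(v)$, $L=\max_v{\sf level}(v)$. $\mathscr{C}_0$ is the singleton clustering. For $i=0,\dots,L$: $C\in\mathscr{C}_i$ is $i$-active if ${\sf level}(C)\ge i$; $H_i$ has as vertices the $i$-active clusters of $\mathscr{C}_i$, with an edge between distinct $C_1,C_2$ iff ${\sf dist}_{\mathcal{M}/\mathscr{C}_i}(C_1,C_2)<2^{i+1}$; $\mathscr{C}_{i+1}$ consists of the non-$i$-active clusters of $\mathscr{C}_i$ together with, for each connected component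 of $H_i$, the union of its clusters. Online setting: pairs arrive in order; for $1\le t\le n$ the instance $(\mathcal{M}^{(t)},D^{(t)})$ consists of the first $t$ pairs and the metric restricted to their terminals. Running the procedure yields $L^{(t)},\mathscr{C}^{(t)}_i,H^{(t)}_i$; for $i\ge L^{(t)}+1$, $\mathscr{C}^{(t)}_i:=\mathscr{C}^{(t)}_{L^{(t)}+1}$ and $H^{(t)}_i$ is empty; for $t=0$ all $\mathscr{C}^{(0)}_i,H^{(0)}_i$ are empty. It holds that $\mathscr{C}^{(t-1)}_i\preceq\mathscr{C}^{(t)}_i$. Virtual forests are chosen recursively in $t$: $\hat F^{(0)}_i=\emptyset$. Given the spanning forest $\hat F^{(t-1)}_i$ of $H^{(t-1)}_i$, for each edge $(C_1,C_2)\in\hat F^{(t-1)}_i$ let $D_1,D_2$ be the clusters of $\mathscr{C}^{(t)}_i$ containing $C_1,C_2$; if $D_1\ne D_2$ then $(D_1,D_2)$ is an edge of $H^{(t)}_i$, called inherited. Let $\hat F^{(t)}_{{\rm inh},i}$ be an arbitrary spanning forest of the subgraph of $H^{(t)}_i$ formed by its inherited edges, and let $\hat F^{(t)}_i$ be an arbitrary spanning forest of $H^{(t)}_i$ containing $\hat F^{(t)}_{{\rm inh},i}$. Finally, $\mathscr{C}^{(t)}_{{\rm inh},i}$ is the clustering consisting of the non-$i$-active clusters of $\mathscr{C}^{(t)}_i$ together with, for each connected component of the graph with vertex set $V(H^{(t)}_i)$ and edge set $\hat F^{(t)}_{{\rm inh},i}$, the union of the clusters in that component. *)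

From HB Require Import structures.
From mathcomp Require Import all_boot all_order all_algebra.
From mathcomp Require Import boolp reals.
Set Implicit Arguments. Unset Strict Implicit. Unset Printing Implicit Defensive.
Import Order.TTheory GRing.Theory Num.Theory.
Local Open Scope ring_scope.

Section OnlineClustering.
(* n demand pairs; pair j consists of terminals u_j = (j,false), v_j = (j,true).
   Pairs arrive in the order of their index j. *)
Variable n : nat.
Variable R : realType.
Local Notation V := ('I_n * bool)%type.
Variable d : V -> V -> R.

Definition mate (v : V) : V := (v.1, ~~ v.2).

(* level(v) = ceil(log2 dist(v, mate v)), i.e. (as dist >= 1) the least
   natural k with dist(v, mate v) <= 2^k. *)
Definition lvl (v : V) : nat :=
  find (fun k : nat => d v (mate v) <= 2 ^+ k)
       (iota 0 (Num.truncn (d v (mate v))).+2).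

Definition clvl (C : {set V}) : nat := \max_(v in C) lvl v.

Definition Vt (t : nat) : {set V} := [set v : V | (v.1 : nat) < t]%N.

(* walks in the graph obtained from the complete weighted graph by contracting
   every cluster of P: each step uses an original edge (x,y) leaving the
   current cluster at x and arriving in the cluster of P containing y *)
Fixpoint cwalk (P : {set {set V}}) (A B : {set V}) (s : seq (V * V)) : bool :=
  if s is p :: s' then
    (p.1 \in A) && [exists A' in P, (p.2 \in A') && cwalk P A' B s']
  else A == B.

Definition cdist_lt (P : {set {set V}}) (A B : {set V}) (r : R) : Prop :=
  exists s : seq (V * V), cwalk P A B s /\ \sum_(p <- s) d p.1 p.2 < r.

Definition active (P : {set {set V}}) (i : nat) : {set {set V}} :=
  [set C in P | (i <= clvl C)%N].

(* graphs on clusters: edges are 2-element sets of clusters *)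
Definition adj (E : {set {set {set V}}}) : rel {set V} :=
  fun a b => [set a; b] \in E.

Definition Hedges (P : {set {set V}}) (i : nat) : {set {set {set V}}} :=
  [set e : {set {set V}} | [exists C1 : {set V}, exists C2 : {set V},
     [&& e == [set C1; C2], C1 \in active P i, C2 \in active P i, C1 != C2 &
         `[< cdist_lt P C1 C2 (2 ^+ i.+1) >] ] ] ].

Definition comp_union (P : {set {set V}}) (i : nat) (E : {set {set {set V}}})
    (C : {set V}) : {set V} :=
  \bigcup_(D in active P i | connect (adj E) C D) D.

Definition merge (P : {set {set V}}) (i : nat) (E : {set {set {set V}}})
    : {set {set V}} :=
  [set C in P | C \notin active P i] :|: [set comp_union P i E C | C in active P i].

(* C^{(t)}_i : the clustering procedure run on the instance of the first t pairs;
   C_{i+1} = merge along H_i.  (For i > L^{(t)} nothing is active, so this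
   agrees with the convention C^{(t)}_i = C^{(t)}_{L^{(t)}+1}; for t = 0 all
   clusterings are empty.) *)
Fixpoint clus (t i : nat) : {set {set V}} :=
  if i is i'.+1 then merge (clus t i') i' (Hedges (clus t i') i')
  else [set [set v] | v in Vt t].

Definition acyclic (F : {set {set {set V}}}) : Prop :=
  ~ exists s : seq {set V}, [&& uniq s, (2 < size s)%N & cycle (adj F) s].

Definition spforest (Vs : {set {set V}}) (E F : {set {set {set V}}}) : Prop :=
  [/\ F \subset E, acyclic F &
      {in Vs &, forall a b, connect (adj F) a b = connect (adj E) a b}].

Definition inh_edges (Fprev : {set {set {set V}}}) (t i : nat)
    : {set {set {set V}}} :=
  Hedges (clus t i) i :&:
  [set e : {set {set V}} | [exists C1 : {set V}, exists C2 : {set V},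
     exists D1 : {set V}, exists D2 : {set V},
     [&& [set C1; C2] \in Fprev, D1 \in clus t i, D2 \in clus t i,
         C1 \subset D1, C2 \subset D2, D1 != D2 & e == [set D1; D2]] ] ].

Definition refines (P1 P2 : {set {set V}}) : Prop :=
  forall C, C \in P1 -> exists2 D, D \in P2 & C \subset D.

Definition valid_forests (Fhat Finh : nat -> nat -> {set {set {set V}}}) : Prop :=
  (forall i, Fhat 0%N i = set0) /\
  (forall t i, (1 <= t <= n)%N ->
     [/\ spforest (active (clus t i) i) (inh_edges (Fhat t.-1 i) t i) (Finh t i),
         Finh t i \subset Fhat t i &
         spforest (active (clus t i) i) (Hedges (clus t i) i) (Fhat t i)]).

Definition clus_inh (Finh : nat -> nat -> {set {set {set V}}}) (t i : nat)
    : {set {set V}} :=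
  merge (clus t i) i (Finh t i).

End OnlineClustering.

From Pilot Require Import Defs.
From HB Require Import structures.
From mathcomp Require Import all_boot all_order all_algebra.
From mathcomp Require Import boolp reals.
Import Order.TTheory GRing.Theory Num.Theory.
Local Open Scope ring_scope.
Set Implicit Arguments. Unset Strict Implicit.

(* If [P] refines [Q], sending each cluster of [P] to a cluster of [Q] containing
   it keeps active clusters active and contracted walks walks, so an edge of
   [H_i] for [P] becomes a loop or an edge of [H_i] for [Q], and connected
   components of [H_i] land inside connected components.  By induction on [i]
   this gives [C^(t-1)_i ⪯ C^(t)_i].  For the claim, a component of
   [H^(t-1)_i] is spanned by the forest [F^(t-1)_i], whose non-collapsing edges
   become inherited edges of [H^(t)_i] and are hence connected in
   [F^(t)_inh,i]. *)

Lemma connect_homo (T T' : finType) (e : rel T) (e' : rel T') (g : T -> T') :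
  (forall x y, e x y -> connect e' (g x) (g y)) ->
  forall x y, connect e x y -> connect e' (g x) (g y).
Proof.
move=> ee' x y /connectP[p e_p ->] {y}.
elim: p x e_p => [|z p IHp] x /=; first by rewrite connect0.
by case/andP=> /ee'/connect_trans + /IHp; apply.
Qed.

Section Refinement.

Variables (n : nat) (R : realType).
Local Notation V := ('I_n * bool)%type.
Variable d : V -> V -> R.
Implicit Types (P Q : {set {set V}}) (A B C : {set V}).

Lemma clvlS A B : A \subset B -> (clvl d A <= clvl d B)%N.
Proof.
move=> sAB; apply/bigmax_leqP => v vA.
exact/leq_bigmax_cond/(subsetP sAB).
Qed.

Lemma Hedges_sub_active P i e : e \in Hedges d P i -> e \subset active d P i.
Proof.
rewrite inE => /existsP[C1 /existsP[C2 /and5P[/eqP-> C1a C2a _ _]]].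
by apply/subsetP=> C /set2P[]->.
Qed.

Lemma merge_cover P i E C :
  C \in P -> exists2 D, D \in Defs.merge d P i E & C \subset D.
Proof.
move=> CP; have [Ca | Cna] := boolP (C \in active d P i).
  exists (comp_union d P i E C); first by rewrite /Defs.merge inE imset_f ?orbT.
  by apply: (bigcup_max C); rewrite ?Ca ?connect0.
by exists C; rewrite // /Defs.merge inE; apply/orP; left; rewrite inE CP.
Qed.

(* [A] itself when no cluster of [Q] contains [A] *)
Definition parent Q A : {set V} := odflt A [pick D in Q | A \subset D].

Section Parent.

Variables P Q : {set {set V}}.
Hypothesis PQ : refines P Q.
Local Notation p := (parent Q).

Lemma parentP A : A \in P -> p A \in Q /\ A \subset p A.
Proof.
move=> AP; rewrite /parent; case: pickP => [D /andP[]|noD] //=.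
have [D DQ AD] := PQ AP.
by move: (noD D); rewrite DQ AD.
Qed.

Lemma active_parent i A : A \in active d P i -> p A \in active d Q i.
Proof.
rewrite !inE => /andP[AP lA]; have [pAQ ApA] := parentP AP.
by rewrite pAQ (leq_trans lA) ?clvlS.
Qed.

Lemma cwalk_parent s A B :
  A \in P -> B \in P -> cwalk P A B s -> cwalk Q (p A) (p B) s.
Proof.
elim: s A => [|[x y] s IHs] A AP BP /=; first by move/eqP->.
case/andP=> xA /existsP[A' /and3P[A'P yA' w]].
have [_ ApA] := parentP AP; have [pA'Q A'pA'] := parentP A'P.
rewrite (subsetP ApA) //=; apply/existsP; exists (p A').
by rewrite pA'Q (subsetP A'pA') ?IHs.
Qed.

Lemma cdist_lt_parent A B r :
  A \in P -> B \in P -> cdist_lt d P A B r -> cdist_lt d Q (p A) (p B) r.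
Proof. by move=> AP BP [s [w ls]]; exists s; rewrite cwalk_parent. Qed.

Lemma Hedges_parent i a b : [set a; b] \in Hedges d P i ->
  p a = p b \/ [set p a; p b] \in Hedges d Q i.
Proof.
rewrite inE => /existsP[C1 /existsP[C2 /and5P[/eqP eab C1a C2a _]]].
move/asboolP=> dC12.
have imset_set2 x y : p @: [set x; y] = [set p x; p y].
  by rewrite imsetU1 imset_set1.
have im_ab : p @: [set a; b] = [set p C1; p C2] by rewrite eab imset_set2.
have [e12 | ne12] := eqVneq (p C1) (p C2).
  have im1 : p @: [set a; b] = [set p C1] by rewrite im_ab e12 setUid.
  have /set1P-> : p a \in [set p C1] by rewrite -im1 imset_f ?set21.
  have /set1P-> : p b \in [set p C1] by rewrite -im1 imset_f ?set22.
  by left.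
right; rewrite -[[set p a; p b]]imset_set2 im_ab inE.
apply/existsP; exists (p C1); apply/existsP; exists (p C2).
have [C1P _] := setIdP C1a; have [C2P _] := setIdP C2a.
by rewrite eqxx !active_parent //= ne12; apply/asboolP/cdist_lt_parent.
Qed.

Lemma merge_refine i EP EQ :
  {in active d P i &, forall a b,
     connect (adj EP) a b -> connect (adj EQ) (p a) (p b)} ->
  refines (Defs.merge d P i EP) (Defs.merge d Q i EQ).
Proof.
move=> EPQ C; rewrite inE => /orP[/setIdP[CP _] | /imsetP[C0 C0a ->]].
  have [pCQ CpC] := parentP CP; have [D Dm pCD] := merge_cover i EQ pCQ.
  by exists D => //; apply: subset_trans pCD.
exists (comp_union d Q i EQ (p C0)); first by rewrite inE imset_f ?active_parent ?orbT.
apply/bigcupsP=> D /andP[Da C0D]; have [DP _] := setIdP Da.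
apply: subset_trans (proj2 (parentP DP)) _.
by apply: (bigcup_max (p D)); rewrite ?active_parent ?EPQ.
Qed.

End Parent.

Lemma clus0 i : clus d 0 i = set0.
Proof.
elim: i => [|i IHi] /=; apply/setP=> C; rewrite inE.
  by apply/imsetP=> -[v]; rewrite inE.
by rewrite IHi !inE; apply/imsetP=> -[C0]; rewrite !inE.
Qed.

Lemma clus_refine t i : refines (clus d t i) (clus d t.+1 i).
Proof.
elim: i => [|i IHi] /=.
  move=> C /imsetP[v]; rewrite inE => vt ->; exists [set v] => //.
  by rewrite imset_f // inE ltnS ltnW.
apply: merge_refine => // a b _ _.
apply: connect_homo => x y /(Hedges_parent IHi)[->|]; first exact: connect0.
exact: connect1.
Qed.

Lemma inh_edge_parent t i (Fprev : {set {set {set V}}}) x y :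
  let Q := clus d t.+1 i in
  Fprev \subset Hedges d (clus d t i) i -> [set x; y] \in Fprev ->
  parent Q x != parent Q y ->
  adj (inh_edges d Fprev t.+1 i) (parent Q x) (parent Q y).
Proof.
move=> Q sFH xyF nexy; have PQ : refines (clus d t i) Q by apply: clus_refine.
have xyH := subsetP sFH _ xyF.
have /subsetP xyA := Hedges_sub_active xyH.
have [xP _] := setIdP (xyA x (set21 x y)); have [yP _] := setIdP (xyA y (set22 x y)).
have [pxQ xpx] := parentP PQ xP; have [pyQ ypy] := parentP PQ yP.
rewrite /adj inE; apply/andP; split.
  by have [/eqP | //] := Hedges_parent PQ xyH; rewrite (negbTE nexy).
rewrite inE; apply/existsP; exists x; apply/existsP; exists y.
apply/existsP; exists (parent Q x); apply/existsP; exists (parent Q y).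
by rewrite xyF pxQ pyQ xpx ypy nexy eqxx.
Qed.

End Refinement.

Theorem lemma4p4 (n : nat) (R : realType)
    (d : 'I_n * bool -> 'I_n * bool -> R)
    (d_refl : forall x, d x x = 0)
    (d_sym : forall x y, d x y = d y x)
    (d_tri : forall x y z, d x z <= d x y + d y z)
    (d_ge1 : forall x y, x != y -> 1 <= d x y)
    (Fhat Finh : nat -> nat -> {set {set {set 'I_n * bool}}})
    (Hvalid : valid_forests d Fhat Finh) :
  forall t i : nat, (1 <= t <= n)%N ->
    refines (clus d t.-1 i.+1) (clus_inh d Finh t i).
Proof.
case=> [|[|t]] i //; first by move=> _ C; rewrite clus0 inE.
case/andP=> _ tn; have [_ Hv] := Hvalid.
have [[_ _ connFinh] _ _] := Hv t.+2 i tn.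
have [_ _ [sFH _ connFhat]] := Hv t.+1 i (ltnW tn).
have PQ : refines (clus d t.+1 i) (clus d t.+2 i) by apply: clus_refine.
rewrite /clus_inh /=; apply: (merge_refine PQ) => a b aA bA; rewrite -connFhat //.
apply: connect_homo => x y xyF.
have [pxy | nexy] := eqVneq (parent (clus d t.+2 i) x) (parent (clus d t.+2 i) y).
  by rewrite pxy connect0.
have /subsetP xyA := Hedges_sub_active (subsetP sFH _ xyF).
rewrite connFinh ?(active_parent PQ) ?xyA ?set21 ?set22 //.
exact/connect1/inh_edge_parent.
Qed.
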